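(* Let $G$ be a graph, $X\subseteq T\subseteq V(G)$, $k'$ an integer, and $H=H_T$ the torso of $T$ in $G$. If there exists a connected $(X,T,k')$-witness $(L,R)$, then there exists a connected $(X,T,k')$-witness $(L',R')$ with $(L'\setminus R')\cap T=(L\setminus R)\cap T$ which further satisfies $N_H((L'\setminus R')\cap T)\supseteq L'\cap R'\cap T$.
   Context: A vertex cut of $G$ is an ordered pair $(L,R)$ with $L\cup R=V(G)$, $L\setminus R,R\setminus L\ne\emptyset$ and no edge between $L\setminus R$ and $R\setminus L$. The torso $H_T$ of $T$ in $G$ is the graph with vertex set $T$ and an edge $\{u,v\}$ whenever $\{u,v\}\in E(G)$ or $u,v\in N_G(D)$ for some connected component $D$ of $G\setminus T$. An $(X,T,k')$-witness is a vertex cut $(L,R)$ of $G$ with $|L\cap R|\le k'$, $|L\cap T|>|L\cap R|$, and $X\subseteq R$; it is connected if $H_T[(L\setminus R)\cap T]$ is connected. $N_H(S)$ denotes the set of vertices outside $S$ adjacent in $H$ to some vertex of $S$. *)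

(* Finite simple graphs: vertex type V : finType,
   adjacency e : rel V, assumed symmetric and irreflexive. *)
From mathcomp Require Import all_boot all_order all_algebra.
Set Implicit Arguments. Unset Strict Implicit. Unset Printing Implicit Defensive.

Section Defs.
Variables (V : finType) (e : rel V).

Definition nbh (r : rel V) (S : {set V}) : {set V} :=
  [set v | (v \notin S) && [exists u in S, r u v]].

Definition vertex_cut (L R : {set V}) : Prop :=
  [/\ L :|: R = setT, L :\: R != set0, R :\: L != set0 &
      forall u v, u \in L :\: R -> v \in R :\: L -> ~~ e u v].

Definition del_rel (T : {set V}) : rel V :=
  [rel x y | [&& x \notin T, y \notin T & e x y]].

Definition component_of (T : {set V}) (D : {set V}) : Prop :=
  exists2 x, x \notin T & D = [set y | connect (del_rel T) x y].

(* the connected component of G \ T containing x (meaningful for x \notin T) *)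
Definition comp (T : {set V}) (x : V) : {set V} := [set y | connect (del_rel T) x y].

(* adjacency of the torso H_T: u,v in T distinct, and either adjacent in G
   or both in N_G(D) for some connected component D of G \ T
   (components of G \ T are exactly the sets comp T x with x \notin T) *)
Definition torso_rel (T : {set V}) : rel V :=
  fun u v => [&& u \in T, v \in T, u != v &
      e u v || [exists x, [&& x \notin T, u \in nbh e (comp T x) & v \in nbh e (comp T x)]]].

Definition induced_connected (r : rel V) (S : {set V}) : Prop :=
  forall x y, x \in S -> y \in S ->
    connect [rel a b | [&& a \in S, b \in S & r a b]] x y.

Definition witness (X T : {set V}) (k : int) (L R : {set V}) : Prop :=
  [/\ vertex_cut L R, (#|L :&: R|%:Z <= k)%R,
      #|L :&: T| > #|L :&: R| & X \subset R].

Definition connected_witness (X T : {set V}) (k : int) (L R : {set V}) : Prop :=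
  witness X T k L R /\ induced_connected (torso_rel T) ((L :\: R) :&: T).

End Defs.

From Pilot Require Import Defs.
From mathcomp Require Import all_boot all_order all_algebra.
From mathcomp Require Import zify.

(* Let A = (L \ R) ∩ T and let Y be A together with those vertices of L \ R
   outside T whose component of G - T has a neighbour in A.  No vertex of L \ R
   outside Y is adjacent to Y, so the new cut (Y ∪ N(Y), V \ Y) has separator
   N(Y) ⊆ L ∩ R, and its left torso part is still A.  A vertex s ∈ N(Y) ∩ T is
   adjacent to A or to a component of G - T touching A, so it is a torso
   neighbour of A.  Finally |L ∩ T| - |L ∩ R| = |A| - |(L ∩ R) \ T|, and passing
   to a smaller separator with the same A can only increase this excess. *)

Set Implicit Arguments.
Unset Strict Implicit.
Unset Printing Implicit Defensive.

Section Neighbourhood.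
Variables (V : finType) (r : rel V).

Lemma nbhP (S : {set V}) (v : V) :
  reflect (v \notin S /\ exists2 u, u \in S & r u v) (v \in nbh r S).
Proof.
rewrite inE; apply: (iffP andP) => [[vS /existsP[u /andP[uS ruv]]] | [vS [u uS ruv]]].
  by split=> //; exists u.
by split=> //; apply/existsP; exists u; rewrite uS.
Qed.

Lemma mem_nbh (S : {set V}) (u v : V) : u \in S -> r u v -> v \notin S -> v \in nbh r S.
Proof. by move=> uS ruv vS; apply/nbhP; split=> //; exists u. Qed.

Lemma setUnbhIC (S : {set V}) : (S :|: nbh r S) :&: ~: S = nbh r S.
Proof.
apply/setP => v; rewrite in_setI in_setU in_setC.
by case: (boolP (v \in nbh r S)) => [/nbhP[/negbTE-> _] | _]; rewrite ?orbF ?andbN.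
Qed.

Lemma setUnbhDC (S : {set V}) : (S :|: nbh r S) :\: ~: S = S.
Proof. by apply/setP => v; rewrite in_setD in_setU in_setC negbK; case: (v \in S). Qed.

End Neighbourhood.

Section Cuts.
Variables (V : finType) (e : rel V).

Lemma vertex_cut_nbh (Y : {set V}) :
  Y != set0 -> ~: (Y :|: nbh e Y) != set0 -> vertex_cut e (Y :|: nbh e Y) (~: Y).
Proof.
move=> Y0 YN0.
have RL : ~: Y :\: (Y :|: nbh e Y) = ~: (Y :|: nbh e Y).
  by apply/setP => v; rewrite in_setD !in_setC in_setU; case: (v \in Y); rewrite ?andbT.
split; rewrite ?setUnbhDC ?RL //.
- by apply/setP => v; rewrite !inE; case: (v \in Y); rewrite ?orbT.
- move=> u v uY; rewrite in_setC in_setU negb_or => /andP[vY].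
  by apply: contra => euv; apply: mem_nbh uY euv vY.
Qed.

Lemma vertex_cut_adj (L R : {set V}) (u v : V) :
  vertex_cut e L R -> u \in L :\: R -> e u v -> v \in L.
Proof.
case=> LR _ _ cut uLR euv; apply: contraT => vL.
have : v \in L :|: R by rewrite LR inE.
rewrite in_setU (negbTE vL) /= => vR.
have vRL : v \in R :\: L by rewrite in_setD vL.
by move: (cut u v uLR vRL); rewrite euv.
Qed.

Lemma nbh_sub_separator (L R Y : {set V}) :
  vertex_cut e L R -> Y \subset L :\: R -> [disjoint nbh e Y & L :\: R] ->
  nbh e Y \subset L :&: R.
Proof.
move=> cut YLR NY; apply/subsetP => v vN.
case/nbhP: (vN) => _ [u /(subsetP YLR) uLR euv].
have vL := vertex_cut_adj cut uLR euv.
by move: (disjointFr NY vN); rewrite !inE vL => /negbT; rewrite negb_and negbK orbF.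
Qed.

End Cuts.

Section Components.
Variables (V : finType) (e : rel V) (T : {set V}).
Hypothesis e_sym : symmetric e.

Lemma mem_comp (x : V) : x \in Defs.comp e T x.
Proof. by rewrite inE connect0. Qed.

Lemma comp_notin (x y : V) : x \notin T -> y \in Defs.comp e T x -> y \notin T.
Proof.
move=> xT; rewrite inE => /connectP[p xp ->]; case/lastP: p xp => [//|p z].
by rewrite rcons_path last_rcons => /andP[_ /and3P[]].
Qed.

Lemma comp_adj (x y : V) :
  x \notin T -> y \notin T -> e x y -> Defs.comp e T x = Defs.comp e T y.
Proof.
move=> xT yT exy; have xy : del_rel e T x y by rewrite /del_rel /= xT yT exy.
have del_sym : symmetric (del_rel e T) by move=> a b; rewrite /del_rel /= e_sym andbCA.
apply/setP => z; rewrite !inE; apply/idP/idP; apply: connect_trans.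
  by rewrite (sym_connect_sym del_sym) connect1.
exact: connect1.
Qed.

Lemma nbh_comp_adj (x s : V) :
  x \notin T -> s \in T -> e x s -> s \in nbh e (Defs.comp e T x).
Proof.
by move=> xT sT exs; apply: mem_nbh (mem_comp x) exs _; apply: contraTN sT; apply: comp_notin.
Qed.

End Components.

Section ComponentClosure.
Variables (V : finType) (e : rel V) (T : {set V}).
Hypothesis e_sym : symmetric e.

Definition comp_closure (S : {set V}) : {set V} :=
  (S :&: T) :|:
  [set x in S :\: T | [exists a in S :&: T, a \in nbh e (Defs.comp e T x)]].

Variable S : {set V}.
Local Notation Y := (comp_closure S).

Lemma comp_closureP (u : V) :
  u \in Y -> u \in S :&: T \/
  u \notin T /\ exists2 a, a \in S :&: T & a \in nbh e (Defs.comp e T u).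
Proof.
case/setUP => [|]; first by left.
by rewrite !inE => /andP[/andP[uT _] /existsP[a /andP[aST an]]]; right; split=> //; exists a.
Qed.

Lemma sub_comp_closure : S :&: T \subset Y.
Proof. exact: subsetUl. Qed.

Lemma comp_closure_sub : Y \subset S.
Proof.
by apply/subsetP => u /setUP[/setIP[] // |]; rewrite !inE => /andP[/andP[_ ->]].
Qed.

Lemma comp_closureT : Y :&: T = S :&: T.
Proof.
apply/setP => u; rewrite !in_setI; case: (boolP (u \in T)) => uT; rewrite ?andbF ?andbT //.
apply/idP/idP => [/(subsetP comp_closure_sub) // | uS].
by apply: (subsetP sub_comp_closure); rewrite inE uS.
Qed.

Lemma disjoint_nbh_comp_closure : [disjoint nbh e Y & S].
Proof.
apply/pred0P => v /=; apply/negbTE; rewrite negb_and.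
case: (boolP (v \in nbh e Y)) => //= /nbhP[vY [u uY euv]]; apply: contra vY => vS.
case: (boolP (v \in T)) => vT; first by apply: (subsetP sub_comp_closure); rewrite inE vS.
apply/setUP; right; rewrite !inE vT vS /=.
case: (comp_closureP uY) => [uST | [uT [a aST an]]].
  apply/existsP; exists u; rewrite uST /=.
  by case/setIP: uST => _ uT; apply: nbh_comp_adj; rewrite // e_sym.
by apply/existsP; exists a; rewrite aST -(comp_adj e_sym uT vT euv).
Qed.

Lemma nbh_comp_closure_torso : nbh e Y :&: T \subset nbh (torso_rel e T) (S :&: T).
Proof.
apply/subsetP => s /setIP[/nbhP[sY [u uY eus]] sT].
have sST : s \notin S :&: T by apply: contra sY; apply: (subsetP sub_comp_closure).
apply/nbhP; split=> //.
have neq_s a : a \in S :&: T -> a != s.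
  by move=> aST; apply: contraNneq sY => <-; apply: (subsetP sub_comp_closure).
case: (comp_closureP uY) => [uST | [uT [a aST an]]].
  by exists u => //; rewrite /torso_rel sT neq_s // eus; case/setIP: uST => _ ->.
exists a => //; rewrite /torso_rel sT neq_s //; case/setIP: aST => _ -> /=.
by apply/orP; right; apply/existsP; exists u; rewrite uT an nbh_comp_adj.
Qed.

End ComponentClosure.

Section Witnesses.
Variables (V : finType) (e : rel V) (T : {set V}).

Lemma card_witness_excess (L R : {set V}) :
  #|L :&: T| + #|(L :&: R) :\: T| = #|(L :\: R) :&: T| + #|L :&: R|.
Proof.
rewrite -(cardsID R (L :&: T)) -(cardsID T (L :&: R)).
have -> : L :&: T :&: R = L :&: R :&: T by rewrite setIAC.
have -> : (L :&: T) :\: R = (L :\: R) :&: T by rewrite !setDE setIAC.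
lia.
Qed.

Lemma ltn_card_witness (L R : {set V}) :
  (#|L :&: R| < #|L :&: T|) = (#|(L :&: R) :\: T| < #|(L :\: R) :&: T|).
Proof. by apply/idP/idP; have := card_witness_excess L R; lia. Qed.

Lemma connected_witness_shrink (X : {set V}) (k : int) (L R L' R' : {set V}) :
  connected_witness e X T k L R -> vertex_cut e L' R' ->
  (L' :\: R') :&: T = (L :\: R) :&: T -> L' :&: R' \subset L :&: R ->
  X \subset R' -> connected_witness e X T k L' R'.
Proof.
move=> [[_ hk hcard _] hconn] cut' eqT sub' XR'.
split; last by rewrite eqT.
have le_sep := subset_leq_card sub'.
split=> //; first lia.
move: hcard; rewrite !ltn_card_witness eqT; apply: leq_ltn_trans.
exact/subset_leq_card/setSD.
Qed.

End Witnesses.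

Theorem mainTheorem12 (V : finType) (e : rel V)
  (e_sym : symmetric e) (e_irr : irreflexive e)
  (X T : {set V}) (k : int)
  (hXT : X \subset T)
  (L R : {set V}) (hLR : connected_witness e X T k L R) :
  exists L' R' : {set V},
    [/\ connected_witness e X T k L' R',
        (L' :\: R') :&: T = (L :\: R) :&: T &
        L' :&: R' :&: T \subset nbh (torso_rel e T) ((L' :\: R') :&: T)].
Proof.
have [[cut _ hcard XR] _] := hLR.
set S := L :\: R; set Y := comp_closure e T S.
have ST0 : S :&: T != set0.
  by rewrite -card_gt0 (leq_ltn_trans (leq0n #|(L :&: R) :\: T|)) // -ltn_card_witness.
have YS : Y \subset S := comp_closure_sub e T S.
have NLR : nbh e Y \subset L :&: R.
  exact: nbh_sub_separator cut YS (disjoint_nbh_comp_closure T e_sym S).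
have YNL : Y :|: nbh e Y \subset L.
  by rewrite subUset (subset_trans YS (subsetDl L R)) (subset_trans NLR (subsetIl L R)).
exists (Y :|: nbh e Y), (~: Y); rewrite setUnbhIC setUnbhDC comp_closureT.
split=> //; last exact: nbh_comp_closure_torso.
apply: connected_witness_shrink hLR _ _ _ _; rewrite ?setUnbhIC ?setUnbhDC ?comp_closureT //.
- case: cut => _ _ RL0 _; apply: vertex_cut_nbh.
    apply: contra_neq ST0 => Y0; apply/eqP; rewrite -subset0 -Y0.
    exact: sub_comp_closure.
  apply: contra_neq RL0 => YN0; apply/eqP; rewrite -subset0 -YN0 setDE.
  by rewrite (subset_trans (subsetIr _ _)) // setCS.
- apply/subsetP => x /(subsetP XR) xR; rewrite inE.
  by apply: contraL xR => /(subsetP YS) /setDP[].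
Qed.
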